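(* Let $\boldsymbol{k}$ be a field of characteristic zero, $P=\boldsymbol{k}[x^1,\dots,x^n]$ with a symplectic Poisson bracket $\{\ ,\ \}$, $I\subseteq P$ a Poisson ideal, $A=P/I$, and $(\Omega_{A|\boldsymbol{k}})^\sharp\subseteq\operatorname{Der}(A)$ the $A$-submodule generated by the classes $\{a,\ \}+I\operatorname{Der}(P)$, $a\in P$. (1) There is a well-defined $A$-bilinear map $\omega^{\mathrm{Ham}}:(\Omega_{A|\boldsymbol{k}})^\sharp\times\operatorname{Der}(A)\to A$ determined by $\omega^{\mathrm{Ham}}(\{a,\ \}+I\operatorname{Der}(P),\,X+I\operatorname{Der}(P))=X(a)+I$ for $a\in P$, $X\in\operatorname{Der}_I(P)$, i.e. the value does not depend on the chosen representatives $a$ and $X$. (2) Let $\delta^{\mathrm{Ham}}$ be the naive de Rham differential of the Lie-Rinehart algebra $((\Omega_{A|\boldsymbol{k}})^\sharp,A)$. Then the restriction of $\omega^{\mathrm{Ham}}$ to $(\Omega_{A|\boldsymbol{k}})^\sharp\times(\Omega_{A|\boldsymbol{k}})^\sharp$, viewed as an element of $\operatorname{Alt}^2_A((\Omega_{A|\boldsymbol{k}})^\sharp,A)$, satisfies $\delta^{\mathrm{Ham}}\omega^{\mathrm{Ham}}=0$.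
   Context: The Poisson bracket is symplectic: its Poisson tensor $\Pi^{ij}=\{x^i,x^j\}\in P$ is non-degenerate (invertible). A Poisson ideal is an ideal with $\{I,P\}\subseteq I$. $\operatorname{Der}_I(P)=\{X\in\operatorname{Der}(P):X(I)\subseteq I\}$ and $\operatorname{Der}(A)\cong\operatorname{Der}_I(P)/I\operatorname{Der}(P)$. For a Lie-Rinehart algebra $(L,A)$ (a $\boldsymbol{k}$-Lie algebra and $A$-module $L$ acting on $A$ by derivations with $[X,aY]=X(a)Y+a[X,Y]$, $(aX)(b)=aX(b)$), the naive de Rham complex has cochains $\operatorname{Alt}^m_A(L,A)$ (alternating $A$-multilinear maps $L^m\to A$) and differential given by the Koszul formula $(\mathrm d\omega)(X_0,\dots,X_m)=\sum_i(-1)^iX_i(\omega(X_0,\dots,\widehat{X_i},\dots,X_m))+\sum_{i<j}(-1)^{i+j}\omega([X_i,X_j],X_0,\dots,\widehat{X_i},\dots,\widehat{X_j},\dots,X_m)$. $(\Omega_{A|\boldsymbol{k}})^\sharp$ is a Lie-Rinehart subalgebra of $(\operatorname{Der}(A),A)$ with the commutator bracket. *)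

From HB Require Import structures.
From mathcomp Require Import all_boot all_order all_algebra.
From mathcomp Require Export mpoly.
Set Implicit Arguments. Unset Strict Implicit. Unset Printing Implicit Defensive.
Import Order.TTheory GRing.Theory.
Local Open Scope ring_scope.

Section PoissonDefs.
Variables (F : fieldType) (n : nat).
Notation P := {mpoly F[n]}.

Definition isDer (D : P -> P) : Prop :=
  (forall (c : F) (p q : P), D (c *: p + q) = c *: D p + D q) /\
  (forall p q : P, D (p * q) = p * D q + D p * q).

Definition isPoisson (br : P -> P -> P) : Prop :=
  [/\ forall (c : F) (p q r : P), br (c *: p + q) r = c *: br p r + br q r,
      forall (c : F) (p q r : P), br r (c *: p + q) = c *: br r p + br r q,
      forall p q : P, br p q = - br q p,
      forall p q r : P, br p (br q r) + br q (br r p) + br r (br p q) = 0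
    & forall p q r : P, br p (q * r) = q * br p r + br p q * r].

Definition poisson_tensor (br : P -> P -> P) : 'M[P]_n :=
  \matrix_(i, j) br 'X_i 'X_j.

Definition symplectic (br : P -> P -> P) : Prop :=
  poisson_tensor br \in unitmx.

Definition is_ideal (I : P -> Prop) : Prop :=
  [/\ I 0, (forall a b, I a -> I b -> I (a + b)) & (forall p a, I a -> I (p * a))].

Definition poisson_ideal (br : P -> P -> P) (I : P -> Prop) : Prop :=
  is_ideal I /\ (forall a p, I a -> I (br a p)).

Definition inIDer (I : P -> Prop) (D : P -> P) : Prop :=
  exists (m : nat) (f : 'I_m -> P) (E : 'I_m -> P -> P),
    [/\ forall j, I (f j), forall j, isDer (E j)
      & forall p, D p = \sum_(j < m) f j * E j p].

Definition isDerI (I : P -> Prop) (D : P -> P) : Prop :=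
  isDer D /\ (forall a, I a -> I (D a)).

(* two representatives in Der_I(P) define the same element of
   Der(A) = Der_I(P) / I Der(P) *)
Definition der_eqmod (I : P -> Prop) (D D' : P -> P) : Prop :=
  inIDer I (fun p => D p - D' p).

(* An element of (Omega_{A|k})^sharp is represented by a finite list
   [(c_1,a_1);...;(c_m,a_m)] of elements of P, standing for the class of
   sum_i c_i {a_i, _} (coefficients c_i represent elements of A = P/I). *)
Definition ham_der (br : P -> P -> P) (L : seq (P * P)) : P -> P :=
  fun p => \sum_(ca <- L) ca.1 * br ca.2 p.

Definition omega_ham (L : seq (P * P)) (X : P -> P) : P :=
  \sum_(ca <- L) ca.1 * X ca.2.

Definition omega_ham2 (br : P -> P -> P) (L1 L2 : seq (P * P)) : P :=
  omega_ham L1 (ham_der br L2).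

Definition der_comm (D1 D2 : P -> P) : P -> P := fun p => D1 (D2 p) - D2 (D1 p).

(* Koszul formula for the naive de Rham differential of a 2-cochain w on
   the Lie-Rinehart algebra (Omega^sharp, A), evaluated on representatives:
   L0, L1, L2 represent X_0, X_1, X_2, and L01, L02, L12 represent the
   brackets [X_0,X_1], [X_0,X_2], [X_1,X_2] (elements of Omega^sharp). *)
Definition koszul2 (br : P -> P -> P) (w : seq (P * P) -> seq (P * P) -> P)
    (L0 L1 L2 L01 L02 L12 : seq (P * P)) : P :=
  ham_der br L0 (w L1 L2) - ham_der br L1 (w L0 L2) + ham_der br L2 (w L0 L1)
  - w L01 L2 + w L02 L1 - w L12 L0.

End PoissonDefs.

From HB Require Import structures.
From mathcomp Require Import all_boot all_order all_algebra.
From mathcomp Require Import mpoly ring.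
Import GRing.Theory.
Local Open Scope ring_scope.
Set Implicit Arguments. Unset Strict Implicit.

(* A list L = [(c_1,a_1); ...] stands for the 1-form theta_L = sum_i c_i da_i; its
   image under the Poisson tensor is ham_der br L = sum_i c_i {a_i, _}, and
   omega_ham L X = theta_L(X) = sum_k theta_L^k X(x^k).  If ham_der br L and
   ham_der br L' agree modulo I, so do (theta_L - theta_L') Pi, hence, Pi being
   invertible, theta_L and theta_L' themselves: this is the well-definedness.
   On Hamiltonian fields omega is antisymmetric, which gives alternation in
   characteristic not 2 and lets the representatives of the brackets in the
   Koszul formula be moved to the second slot, where only their values modulo I
   matter.  With the exact commutators (again Hamiltonian, by the Leibniz rule)
   the Koszul expression is additive in each argument, and on single terms
   c{a,_}, d{b,_}, e{g,_} it vanishes by the Leibniz rule and the Jacobi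
   identity. *)

Section Derivation.
Variables (F : fieldType) (n : nat).

(* The coordinates of theta_L in the basis dx^k. *)
Definition form_coord (L : seq ({mpoly F[n]} * {mpoly F[n]})) : 'rV_n :=
  \row_k \sum_(x <- L) x.1 * x.2^`M(k).

Variable D : {mpoly F[n]} -> {mpoly F[n]}.
Hypothesis D_der : isDer D.

Lemma derZD c p q : D (c *: p + q) = c *: D p + D q.
Proof. by case: D_der. Qed.

Lemma derM p q : D (p * q) = p * D q + D p * q.
Proof. by case: D_der. Qed.

Lemma derD p q : D (p + q) = D p + D q.
Proof. by have := derZD 1 p q; rewrite !scale1r. Qed.

Lemma der0 : D 0 = 0.
Proof. by apply: (@addrI _ (D 0)); rewrite -derD !addr0. Qed.

Lemma derZ c p : D (c *: p) = c *: D p.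
Proof. by rewrite -[c *: p]addr0 derZD der0 addr0. Qed.

Lemma derN p : D (- p) = - D p.
Proof. by rewrite -scaleN1r derZ scaleN1r. Qed.

Lemma der_sum (T : Type) (s : seq T) (f : T -> {mpoly F[n]}) :
  D (\sum_(t <- s) f t) = \sum_(t <- s) D (f t).
Proof. by elim: s => [|t s IH]; rewrite ?big_nil ?der0 // !big_cons derD IH. Qed.

Lemma der1 : D 1 = 0.
Proof.
have := derM 1 1; rewrite !mul1r mulr1 => D1.
by apply: (@addrI _ (D 1)); rewrite addr0 -D1.
Qed.

Lemma der_chain p : D p = \sum_(i < n) p^`M(i) * D 'X_i.
Proof.
pose chain q := D q = \sum_(i < n) q^`M(i) * D 'X_i.
have chain1 : chain 1.
  by rewrite /chain der1 big1 // => i _; rewrite -mpolyC1 mderivC mul0r.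
have chainM q r : chain q -> chain r -> chain (q * r).
  rewrite /chain derM => -> ->; rewrite big_distrr big_distrl -big_split /=.
  by apply: eq_bigr => i _; rewrite mderivM; ring.
have chainX j : chain 'X_j.
  rewrite /chain (bigD1 j) //= big1 ?addr0 => [|i /negbTE neq_ij].
    rewrite mderivX mnm1E eqxx.
    have -> : (U_(j) - U_(j))%MM = 0%MM by apply/mnmP => k; rewrite mnmBE subnn mnm0E.
    by rewrite mpolyX0 scale1r mul1r.
  by rewrite mderivX mnm1E eq_sym neq_ij scale0r mul0r.
elim/mpolyind: p => [|c m q _ _ IH].
  by rewrite /chain der0 big1 // => i _; rewrite mderiv0 mul0r.
have chainXm : chain 'X_[m].
  rewrite mpolyXE_id; apply: (big_ind chain) => // i _.
  by elim: (m i) => [|k IHk]; rewrite ?expr0 // exprS; apply: chainM.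
rewrite /chain derD derZ chainXm IH scaler_sumr -big_split /=.
by apply: eq_bigr => i _; rewrite mderivD mderivZ mulrDl scalerAl.
Qed.

Lemma omega_ham_coord L : omega_ham L D = \sum_(k < n) form_coord L 0 k * D 'X_k.
Proof.
rewrite /omega_ham; under eq_bigr => x _ do rewrite der_chain big_distrr.
rewrite exchange_big; apply: eq_bigr => k _; rewrite mxE big_distrl.
by apply: eq_bigr => x _; rewrite /= mulrA.
Qed.

End Derivation.

Section Ideal.
Variables (F : fieldType) (n : nat) (I : {mpoly F[n]} -> Prop).
Hypothesis I_ideal : is_ideal I.

Lemma ideal0 : I 0.
Proof. by case: I_ideal. Qed.

Lemma idealD a b : I a -> I b -> I (a + b).
Proof. by case: I_ideal => _ + _; apply. Qed.

Lemma idealMl p a : I a -> I (p * a).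
Proof. by case: I_ideal => _ _; apply. Qed.

Lemma idealMr p a : I a -> I (a * p).
Proof. by rewrite mulrC; apply: idealMl. Qed.

Lemma idealN a : I a -> I (- a).
Proof. by rewrite -mulN1r; apply: idealMl. Qed.

Lemma idealB a b : I a -> I b -> I (a - b).
Proof. by move=> Ia Ib; apply/idealD/idealN. Qed.

Lemma ideal_sum (T : Type) (s : seq T) (f : T -> {mpoly F[n]}) :
  (forall t, I (f t)) -> I (\sum_(t <- s) f t).
Proof. by move=> If; apply: big_ind => //; [apply: ideal0 | apply: idealD]. Qed.

Lemma inIDer_ideal D : inIDer I D -> forall p, I (D p).
Proof. by case=> m [f [E [If _ DE]]] p; rewrite DE; apply: ideal_sum => j; apply: idealMr. Qed.

Lemma omega_ham_eqmod_r L D D' : (forall p, I (D p - D' p)) ->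
  I (omega_ham L D - omega_ham L D').
Proof.
move=> ID; rewrite /omega_ham -sumrB; apply: ideal_sum => x.
by rewrite -mulrBr; apply: idealMl.
Qed.

Lemma koszul2_eqmod br w (L0 L1 L2 L01 L02 L12 L01' L02' L12' : seq _) :
  I (w L01 L2 - w L01' L2) -> I (w L02 L1 - w L02' L1) -> I (w L12 L0 - w L12' L0) ->
  I (koszul2 br w L0 L1 L2 L01 L02 L12 - koszul2 br w L0 L1 L2 L01' L02' L12').
Proof.
move=> I01 I02 I12.
have -> : koszul2 br w L0 L1 L2 L01 L02 L12 - koszul2 br w L0 L1 L2 L01' L02' L12'
  = w L02 L1 - w L02' L1 - (w L01 L2 - w L01' L2) - (w L12 L0 - w L12' L0).
  by rewrite /koszul2; ring.
by apply: idealB => //; apply: idealB.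
Qed.

End Ideal.

Lemma der_eqmod_eq (F : fieldType) (n : nat) (I : {mpoly F[n]} -> Prop) D D' :
  D =1 D' -> der_eqmod I D D'.
Proof.
move=> eqD; exists 0%N, (fun=> 0), (fun=> id).
by split=> [[]|[]|p] //; rewrite big_ord0 eqD subrr.
Qed.

Lemma omega_ham_ext (F : fieldType) (n : nat) (L : seq ({mpoly F[n]} * {mpoly F[n]})) D D' :
  D =1 D' -> omega_ham L D = omega_ham L D'.
Proof. by move=> eqD; apply: eq_bigr => x _; rewrite eqD. Qed.

Lemma sum3_rotl (V : nmodType) (A B C : Type) (sA : seq A) (sB : seq B) (sC : seq C)
    (f : A -> B -> C -> V) :
  \sum_(c <- sC) \sum_(a <- sA) \sum_(b <- sB) f a b c
  = \sum_(a <- sA) \sum_(b <- sB) \sum_(c <- sC) f a b c.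
Proof. by rewrite exchange_big; apply: eq_bigr => a _; rewrite exchange_big. Qed.

Section PoissonBracket.
Variables (F : fieldType) (n : nat) (br : {mpoly F[n]} -> {mpoly F[n]} -> {mpoly F[n]}).
Hypothesis br_Poisson : isPoisson br.
Local Notation ham := (ham_der br).

Lemma ham_der_omega_ham L p : ham L p = omega_ham L (br^~ p).
Proof. by []. Qed.

Lemma br_anti p q : br p q = - br q p.
Proof. by case: br_Poisson. Qed.

Lemma br_der p : isDer (br p).
Proof. by case: br_Poisson => _ linr _ _ Leib; split=> [c q r|]; [apply: linr | apply: Leib]. Qed.

Lemma br_der_l q : isDer (br^~ q).
Proof.
case: br_Poisson => linl _ _ _ _; split=> [c p r|p r]; first exact: linl.
by rewrite br_anti (derM (br_der q)) (br_anti q r) (br_anti q p); ring.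
Qed.

Lemma br_brl a b p : br (br a b) p = br a (br b p) - br b (br a p).
Proof.
case: br_Poisson => _ _ _ Jacobi _; have := Jacobi a b p.
rewrite (br_anti p a) (br_anti p (br a b)) (derN (br_der b)).
by move/eqP; rewrite -addrA addr_eq0 => /eqP ->; ring.
Qed.

Lemma ham_comm1 c a d b p :
  c * br a (d * br b p) - d * br b (c * br a p)
  = c * d * br (br a b) p + c * br a d * br b p - d * br b c * br a p.
Proof. by rewrite !(derM (br_der _)) br_brl; ring. Qed.

Lemma der_comm_hamE L1 L2 p :
  der_comm (ham L1) (ham L2) p =
  \sum_(x <- L1) \sum_(y <- L2)
     (x.1 * br x.2 (y.1 * br y.2 p) - y.1 * br y.2 (x.1 * br x.2 p)).
Proof.
rewrite /der_comm /ham_der.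
under eq_bigr => x _ do rewrite (der_sum (br_der _)) big_distrr.
under [X in _ - X]eq_bigr => y _ do rewrite (der_sum (br_der _)) big_distrr.
by rewrite [X in _ - X]exchange_big -sumrB; apply: eq_bigr => x _; rewrite -sumrB.
Qed.

Definition ham_comm_seq (L1 L2 : seq ({mpoly F[n]} * {mpoly F[n]})) :=
  [seq (x.1 * y.1, br x.2 y.2) | x <- L1, y <- L2]
  ++ [seq (x.1 * br x.2 y.1, y.2) | x <- L1, y <- L2]
  ++ [seq (- (y.1 * br y.2 x.1), x.2) | x <- L1, y <- L2].

Lemma ham_comm_seqE L1 L2 :
  ham (ham_comm_seq L1 L2) =1 der_comm (ham L1) (ham L2).
Proof.
move=> p; rewrite /ham_der !big_cat !big_allpairs_dep /= der_comm_hamE -!big_split.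
apply: eq_bigr => x _; rewrite -!big_split; apply: eq_bigr => y _ /=.
by rewrite ham_comm1; ring.
Qed.

Lemma omega_hamE L1 L2 :
  omega_ham L1 (ham L2) = \sum_(x <- L1) \sum_(y <- L2) x.1 * (y.1 * br y.2 x.2).
Proof. by apply: eq_bigr => x _; rewrite big_distrr. Qed.

Lemma omega_ham_anti L1 L2 : omega_ham L1 (ham L2) = - omega_ham L2 (ham L1).
Proof.
rewrite !omega_hamE exchange_big -sumrN; apply: eq_bigr => y _.
by rewrite -sumrN; apply: eq_bigr => x _; rewrite br_anti; ring.
Qed.

Lemma omega_ham_self L : 2%:R != 0 :> F -> omega_ham L (ham L) = 0.
Proof.
move=> two_neq0; apply: (scalerI two_neq0).
by rewrite scaler0 scaler_nat mulr2n {2}omega_ham_anti subrr.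
Qed.

Lemma ham_omega_hamE L0 L1 L2 :
  ham L0 (omega_ham L1 (ham L2)) =
  \sum_(x <- L0) \sum_(y <- L1) \sum_(z <- L2) x.1 * br x.2 (y.1 * (z.1 * br z.2 y.2)).
Proof.
rewrite omega_hamE; apply: eq_bigr => x _; rewrite (der_sum (br_der _)) big_distrr.
by apply: eq_bigr => y _; rewrite (der_sum (br_der _)) big_distrr.
Qed.

Lemma omega_ham_commE L0 L1 L2 :
  omega_ham L0 (der_comm (ham L1) (ham L2)) =
  \sum_(x <- L0) \sum_(y <- L1) \sum_(z <- L2)
     x.1 * (y.1 * br y.2 (z.1 * br z.2 x.2) - z.1 * br z.2 (y.1 * br y.2 x.2)).
Proof.
apply: eq_bigr => x _; rewrite der_comm_hamE big_distrr.
by apply: eq_bigr => y _; rewrite big_distrr.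
Qed.

Lemma omega_ham_cocycle1 c a d b e g :
  c * br a (d * (e * br g b)) - d * br b (c * (e * br g a))
  + e * br g (c * (d * br b a))
  + e * (c * br a (d * br b g) - d * br b (c * br a g))
  - d * (c * br a (e * br g b) - e * br g (c * br a b))
  + c * (d * br b (e * br g a) - e * br g (d * br b a)) = 0.
Proof.
rewrite !(derM (br_der _)) (br_anti g b) (br_anti g a) (br_anti b a).
by rewrite !(derN (br_der _)) (br_anti g (br a b)) br_brl; ring.
Qed.

Lemma omega_ham_cocycle L0 L1 L2 :
  ham L0 (omega_ham L1 (ham L2)) - ham L1 (omega_ham L0 (ham L2))
  + ham L2 (omega_ham L0 (ham L1))
  + omega_ham L2 (der_comm (ham L0) (ham L1))
  - omega_ham L1 (der_comm (ham L0) (ham L2))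
  + omega_ham L0 (der_comm (ham L1) (ham L2)) = 0.
Proof.
rewrite !ham_omega_hamE !omega_ham_commE !(exchange_big _ L1 L0) !(sum3_rotl L0 L1 L2).
do 3 (rewrite -sumrB -!big_split -sumrB -big_split big1 // => ? _ /=).
exact: omega_ham_cocycle1.
Qed.

Lemma koszul2_ham_comm_seq L0 L1 L2 :
  koszul2 br (omega_ham2 br) L0 L1 L2
    (ham_comm_seq L0 L1) (ham_comm_seq L0 L2) (ham_comm_seq L1 L2) = 0.
Proof.
rewrite /koszul2 /omega_ham2 !(omega_ham_anti (ham_comm_seq _ _)) !opprK.
by rewrite !(omega_ham_ext _ (ham_comm_seqE _ _)) omega_ham_cocycle.
Qed.

Lemma form_coord_tensor L : form_coord L *m poisson_tensor br = \row_l ham L 'X_l.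
Proof.
apply/rowP => l; rewrite !mxE ham_der_omega_ham (omega_ham_coord (br_der_l 'X_l)).
by apply: eq_bigr => k _; rewrite !mxE.
Qed.

End PoissonBracket.

Section PoissonIdeal.
Variables (F : fieldType) (n : nat) (br : {mpoly F[n]} -> {mpoly F[n]} -> {mpoly F[n]}).
Variable I : {mpoly F[n]} -> Prop.
Hypotheses (br_Poisson : isPoisson br) (I_ideal : is_ideal I).
Local Notation ham := (ham_der br).

Lemma form_coord_eqmod L L' : symplectic br ->
  (forall p, I (ham L p - ham L' p)) -> forall k, I (form_coord L 0 k - form_coord L' 0 k).
Proof.
move=> Pi_unit IL k.
have -> : form_coord L 0 k - form_coord L' 0 k = (form_coord L - form_coord L') 0 k.
  by rewrite !mxE.
rewrite -(mulmxK Pi_unit (form_coord L - form_coord L')) mulmxBl !form_coord_tensor //.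
by rewrite mxE; apply: ideal_sum => // l; rewrite !mxE; apply: idealMr.
Qed.

Lemma omega_ham_eqmod_l L L' X : symplectic br -> isDer X ->
  (forall p, I (ham L p - ham L' p)) -> I (omega_ham L X - omega_ham L' X).
Proof.
move=> Pi_unit X_der IL; rewrite !(omega_ham_coord X_der) -sumrB.
apply: ideal_sum => // k; rewrite -mulrBl; apply: idealMr => //.
exact: form_coord_eqmod.
Qed.

Lemma omega_ham_eqmod L L' X X' : symplectic br -> isDer X' ->
  der_eqmod I (ham L) (ham L') -> der_eqmod I X X' ->
  I (omega_ham L X - omega_ham L' X').
Proof.
move=> Pi_unit X'_der IL IX.
rewrite -[omega_ham L X](subrK (omega_ham L X')) -addrA.
apply: idealD => //; first by apply: omega_ham_eqmod_r => //; apply: inIDer_ideal.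
by apply: omega_ham_eqmod_l => //; apply: inIDer_ideal.
Qed.

Lemma omega_ham2_eqmod_l L L' L2 : (forall p, I (ham L p - ham L' p)) ->
  I (omega_ham2 br L L2 - omega_ham2 br L' L2).
Proof.
move=> IL; rewrite /omega_ham2 !(omega_ham_anti br_Poisson _ L2) opprK addrC -opprB.
by apply: idealN => //; apply: omega_ham_eqmod_r.
Qed.

Lemma koszul2_omega_ham2 L0 L1 L2 L01 L02 L12 :
  der_eqmod I (ham L01) (der_comm (ham L0) (ham L1)) ->
  der_eqmod I (ham L02) (der_comm (ham L0) (ham L2)) ->
  der_eqmod I (ham L12) (der_comm (ham L1) (ham L2)) ->
  I (koszul2 br (omega_ham2 br) L0 L1 L2 L01 L02 L12).
Proof.
move=> /(inIDer_ideal I_ideal) I01 /(inIDer_ideal I_ideal) I02 /(inIDer_ideal I_ideal) I12.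
rewrite -[koszul2 _ _ _ _ _ _ _ _]subr0 -(koszul2_ham_comm_seq br_Poisson L0 L1 L2).
by apply: koszul2_eqmod => //; apply: omega_ham2_eqmod_l => // p; rewrite ham_comm_seqE.
Qed.

End PoissonIdeal.

Theorem mainTheorem2 (F : fieldType) (n : nat)
    (br : {mpoly F[n]} -> {mpoly F[n]} -> {mpoly F[n]})
    (I : {mpoly F[n]} -> Prop) :
  [pchar F] =i pred0 ->
  isPoisson br -> symplectic br -> poisson_ideal br I ->
  (* (1) omega^Ham is well defined on (Omega^sharp) x Der(A) *)
  (forall (L L' : seq ({mpoly F[n]} * {mpoly F[n]}))
          (X X' : {mpoly F[n]} -> {mpoly F[n]}),
      isDerI I X -> isDerI I X' ->
      der_eqmod I (ham_der br L) (ham_der br L') ->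
      der_eqmod I X X' ->
      I (omega_ham L X - omega_ham L' X'))
  /\
  (* (2) the restriction to Omega^sharp x Omega^sharp is an alternating
         2-cochain of the Lie-Rinehart algebra (Omega^sharp, A), Omega^sharp is
         closed under the commutator bracket, and delta^Ham omega^Ham = 0 *)
  ((forall L : seq ({mpoly F[n]} * {mpoly F[n]}), I (omega_ham2 br L L))
   /\ (forall L1 L2 : seq ({mpoly F[n]} * {mpoly F[n]}),
         exists L12 : seq ({mpoly F[n]} * {mpoly F[n]}),
           der_eqmod I (ham_der br L12)
                       (der_comm (ham_der br L1) (ham_der br L2)))
   /\ (forall L0 L1 L2 L01 L02 L12 : seq ({mpoly F[n]} * {mpoly F[n]}),
         der_eqmod I (ham_der br L01) (der_comm (ham_der br L0) (ham_der br L1)) ->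
         der_eqmod I (ham_der br L02) (der_comm (ham_der br L0) (ham_der br L2)) ->
         der_eqmod I (ham_der br L12) (der_comm (ham_der br L1) (ham_der br L2)) ->
         I (koszul2 br (omega_ham2 br) L0 L1 L2 L01 L02 L12))).
Proof.
move=> char0 br_Poisson Pi_unit [I_ideal _].
have two_neq0 : 2%:R != 0 :> F by move/pcharf0P: char0 => ->.
split; first by move=> L L' X X' _ [X'_der _]; apply: omega_ham_eqmod.
split; first by move=> L; rewrite /omega_ham2 omega_ham_self //; apply: ideal0.
split; last exact: koszul2_omega_ham2.
by move=> L1 L2; exists (ham_comm_seq br L1 L2); apply/der_eqmod_eq/ham_comm_seqE.
Qed.
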